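(* Let $n\ge3$, $\boldsymbol\ell=(\ell_1,\ldots,\ell_n)$ positive lengths, $\mu\in\mathbb{R}$, and $\tau$, $N>0$ smooth functions on $T^n$ of $s^1$ only; let $\tau^*=\int_{S^1}N\tau\,ds/\int_{S^1}N\,ds$. Suppose either (a) $\mu,\tau^*$ are nonzero with the same sign and $r=(\mu/\tau^* )^{1/n}$, or (b) $\mu=\tau^*=0$ and $r>0$ is arbitrary; and let $(\bar g,\bar K)=(g_{r\boldsymbol\ell},\ \tau\,(r\ell_1)^2(ds^1)^2)$ be the corresponding solution of the constraint equations generated by the conformal data set $(g_{\boldsymbol\ell},\mu\sigma^\flat_{\boldsymbol\ell},\tau,N)$. Let $\tau^\circ=\int_{S^1}\tau\,ds$ and $\hat{\boldsymbol\ell}=(r\ell_2,\ldots,r\ell_n)$. If $\tau^\circ\ne0$, then $\bar g$ and $\bar K$ are the induced metric and second fundamental form of a simple product embedding of $T^n$ into the flat Kasner spacetime $\mathcal K_\Psi\times T^{n-1}_{\hat{\boldsymbol\ell}}$ with $\Psi=(r\ell_1)\tau^\circ$. If $\tau^\circ=0$, then $\bar g$ and $\bar K$ are the induced metric and second fundamental form of a simple product embedding into a static toroidal spacetime $\mathcal C_L\times T^{n-1}_{\hat{\boldsymbol\ell}}$ for some $L>0$.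
   Context: $q=\frac{2n}{n-2}$, $\kappa=\frac{n-1}{n}$. $S^1=\mathbb{R}/\mathbb{Z}$ with unit coordinate $s$ ($\int_{S^1}ds=1$); $T^n$ has unit coordinates $(s^1,\ldots,s^n)$; $g_{\boldsymbol\ell}=\sum_k\ell_k^2(ds^k)^2$; $T^{m}_{\hat{\boldsymbol\ell}}$ is $T^m$ with $g_{\hat{\boldsymbol\ell}}$; $\sigma^\flat_{\boldsymbol\ell}=\kappa\ell_1^2(ds^1)^2-\frac1n\sum_{k\ge2}\ell_k^2(ds^k)^2$. $\mathbb{R}^{1,1}$ is $\mathbb{R}^2$ with coordinates $(t,x)$ and metric $-dt^2+dx^2$, time-oriented by $\partial_t$; $I_\pm=\{\pm t>|x|\}$. For $\Psi\ne0$, $B_\Psi$ is the linear boost with matrix $\begin{pmatrix}\cosh\Psi&\sinh\Psi\\ \sinh\Psi&\cosh\Psi\end{pmatrix}$; the Kasner surface $\mathcal K_\Psi$ is $I_+/\langle B_\Psi\rangle$ if $\Psi>0$ and $I_-/\langle B_\Psi\rangle$ if $\Psi<0$, with the inherited time-oriented flat Lorentzian metric. For $L>0$, $\mathcal C_L=\mathbb{R}^{1,1}/\langle(t,x)\mapsto(t,x+L)\rangle$. Products carry the product Lorentzian metric; $\mathcal K_\Psi\times T^{n-1}_{\hat{\boldsymbol\ell}}$ is isometric to a flat Kasner spacetime and $\mathcal C_L\times T^{n-1}_{\hat{\boldsymbol\ell}}$ is a static toroidal spacetime. A simple product embedding $\iota:T^n\to\Lambda\times T^{n-1}_{\hat{\boldsymbol\ell}}$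 ($\Lambda$ a Lorentzian surface) has the form $\iota(s^1,\ldots,s^n)=(\gamma(s^1),(s^2,\ldots,s^n))$ for a curve $\gamma:S^1\to\Lambda$. Induced second fundamental form: $K(X,Y)=-\langle n,\nabla_XY\rangle$ with $n$ the future unit normal. *)

From Stdlib Require Import Reals Lra ZArith.
From Coquelicot Require Import Coquelicot.
Open Scope R_scope.

(** Points of R^m are represented as functions nat -> R (only the first m
    coordinates matter).  Index convention: coordinate s^k of the paper is
    [s (k-1)], the length l_k is [l (k-1)]. *)

Definition smooth1 (f : R -> R) : Prop := forall k x, ex_derive_n f k x.

(** 1-periodic function: a function on S^1 = R/Z *)
Definition periodic1 (f : R -> R) : Prop := forall x, f (x + 1) = f x.

Definition upd (s : nat -> R) (i : nat) (h : R) : nat -> R :=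
  fun k => if Nat.eqb k i then s k + h else s k.

Definition pd (F : (nat -> R) -> (nat -> R)) (i : nat) (s : nat -> R) : nat -> R :=
  fun j => Derive (fun h => F (upd s i h) j) 0.

Definition pd2 (F : (nat -> R) -> (nat -> R)) (i k : nat) (s : nat -> R) : nat -> R :=
  fun j => Derive (fun h => pd F k (upd s i h) j) 0.

Definition mink (n : nat) (u v : nat -> R) : R :=
  - u 0%nat * v 0%nat + sum_f_R0 (fun a => u (S a) * v (S a)) (n - 1).

Definition induced_metric (n : nat) (F : (nat -> R) -> (nat -> R))
  (s : nat -> R) (i j : nat) : R := mink n (pd F i s) (pd F j s).

Definition future_unit_normal (n : nat) (F : (nat -> R) -> (nat -> R))
  (s : nat -> R) (nu : nat -> R) : Prop :=
  (forall i, (i < n)%nat -> mink n nu (pd F i s) = 0) /\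
  mink n nu nu = -1 /\ 0 < nu 0%nat.

Definition second_ff (n : nat) (F : (nat -> R) -> (nat -> R))
  (nu : nat -> R) (s : nat -> R) (i j : nat) : R := - mink n nu (pd2 F i j s).

(** The lift to the universal (Minkowski) cover R^{1,1} x R^{n-1} of the
    simple product embedding (s^1,...,s^n) |-> (gamma(s^1),(s^2,...,s^n)) into
    Lambda x T^{n-1}_{lhat}, where gamma is given by the lift (Gt,Gx) : R -> R^{1,1}
    and lhat k is the length of the (k+1)-st circle (k = 1..n-1). *)
Definition product_lift (Gt Gx : R -> R) (lhat : nat -> R)
  : (nat -> R) -> (nat -> R) :=
  fun s j => match j with
             | 0%nat => Gt (s 0%nat)
             | 1%nat => Gx (s 0%nat)
             | S (S k) => lhat (S k) * s (S k)
             end.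

Definition boost (Psi : R) (t x : R) : R * R :=
  (cosh Psi * t + sinh Psi * x, sinh Psi * t + cosh Psi * x).

(** (Gt,Gx) : R -> R^{1,1} is the lift of a smooth embedded closed curve
    gamma : S^1 -> K_Psi = I_{sign Psi} / <B_Psi>. *)
Definition kasner_curve_lift (Psi : R) (Gt Gx : R -> R) : Prop :=
  Psi <> 0 /\ smooth1 Gt /\ smooth1 Gx /\
  (forall s, if Rlt_dec 0 Psi then Rabs (Gx s) < Gt s else Rabs (Gx s) < - Gt s) /\
  (exists m : Z, forall s,
     (Gt (s + 1), Gx (s + 1)) = boost (IZR m * Psi) (Gt s) (Gx s)) /\
  (forall s, Derive Gt s <> 0 \/ Derive Gx s <> 0) /\
  (forall s s' (k : Z), (Gt s', Gx s') = boost (IZR k * Psi) (Gt s) (Gx s) ->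
     exists j : Z, s' = s + IZR j).

(** (Gt,Gx) : R -> R^{1,1} is the lift of a smooth embedded closed curve
    gamma : S^1 -> C_L = R^{1,1} / <(t,x) |-> (t,x+L)>. *)
Definition cylinder_curve_lift (L : R) (Gt Gx : R -> R) : Prop :=
  0 < L /\ smooth1 Gt /\ smooth1 Gx /\
  (exists m : Z, forall s, Gt (s + 1) = Gt s /\ Gx (s + 1) = Gx s + IZR m * L) /\
  (forall s, Derive Gt s <> 0 \/ Derive Gx s <> 0) /\
  (forall s s' (k : Z), Gt s' = Gt s -> Gx s' = Gx s + IZR k * L ->
     exists j : Z, s' = s + IZR j).

(** the pair (gbar, Kbar) is the induced metric and second fundamental form
    of the map F : T^n -> spacetime (computed on the Minkowski lift F) *)
Definition induces (n : nat) (F : (nat -> R) -> (nat -> R))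
  (gbar Kbar : (nat -> R) -> nat -> nat -> R) : Prop :=
  forall s : nat -> R,
    (forall i j, (i < n)%nat -> (j < n)%nat -> induced_metric n F s i j = gbar s i j) /\
    exists nu, future_unit_normal n F s nu /\
      forall i j, (i < n)%nat -> (j < n)%nat -> second_ff n F nu s i j = Kbar s i j.

Definition flat_metric (l : nat -> R) : (nat -> R) -> nat -> nat -> R :=
  fun _ i j => if Nat.eqb i j then (l i) ^ 2 else 0.

Definition Kbar_of (tau : R -> R) (l1 : R) : (nat -> R) -> nat -> nat -> R :=
  fun s i j => if andb (Nat.eqb i 0) (Nat.eqb j 0) then tau (s 0%nat) * l1 ^ 2 else 0.

From Stdlib Require Import Reals Lra Lia ZArith.
From Coquelicot Require Import Coquelicot.
Open Scope R_scope.

(* Write c = r l_1 and phi s = c int_0^s tau.  In the null coordinates u = t + x,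
   w = x - t of R^{1,1}, a curve with u' = a e^phi and w' = g e^(-phi), where a g = c^2,
   has -t'^2 + x'^2 = u' w' = c^2 and second fundamental form c^2 tau with respect to
   its future normal, so the product embedding induces g_{r l} and tau (r l_1)^2 (ds^1)^2.
   Over one period phi grows by Psi = c int_0^1 tau.  If Psi <> 0 the integration
   constants can be chosen so that u (s + 1) = e^Psi u s and w (s + 1) = e^(-Psi) w s,
   which is the boost B_Psi in null coordinates; since u and w increase, the curve lies
   in I_(sign Psi) and is embedded in the Kasner quotient.  If Psi = 0, e^(+-phi) are
   periodic, u and w advance by a P and g M per period (P, M the integrals of e^(+-phi)
   over a period), and the choice a P = g M makes t periodic while x advances by a P.
   The hypotheses on mu and tau* enter only through r > 0. *)

(** * Smooth functions of one variable *)

Definition Ck (k : nat) (f : R -> R) : Prop :=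
  forall m x, (m <= k)%nat -> ex_derive_n f m x.

Lemma smooth1_Ck f : smooth1 f <-> forall k, Ck k f.
Proof.
  split.
  - intros H k m x _. apply H.
  - intros H k x. apply (H k k x). lia.
Qed.

Lemma Ck_le k m f : (m <= k)%nat -> Ck k f -> Ck m f.
Proof. intros Hmk H j x Hj. apply H. lia. Qed.

Lemma Derive_n_S_is_derive f g :
  (forall x, is_derive f x (g x)) -> forall m x, Derive_n f (S m) x = Derive_n g m x.
Proof.
  intros H m x. rewrite <- Nat.add_1_r, <- Derive_n_comp.
  apply Derive_n_ext. intros t. apply is_derive_unique, H.
Qed.

Lemma Ck_S_is_derive k f g :
  (forall x, is_derive f x (g x)) -> Ck k g -> Ck (S k) f.
Proof.
  intros H Hg [|[|m]] x Hm.
  - exact I.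
  - exists (g x). apply H.
  - apply (ex_derive_ext (Derive_n g m)).
    + intros t. symmetry. apply (Derive_n_S_is_derive f g H).
    + apply (Hg (S m) x). lia.
Qed.

Lemma Ck_S_is_derive_Derive k f : Ck (S k) f -> forall x, is_derive f x (Derive f x).
Proof. intros H x. apply Derive_correct, (H 1%nat x). lia. Qed.

Lemma Ck_S_Derive k f : Ck (S k) f -> Ck k (Derive f).
Proof.
  intros H [|m] x Hm; [exact I|].
  apply (ex_derive_ext (Derive_n f (S m))).
  - intros t. apply (Derive_n_S_is_derive f (Derive f) (Ck_S_is_derive_Derive k f H)).
  - apply (H (S (S m)) x). lia.
Qed.

Lemma Ck_plus k f g : Ck k f -> Ck k g -> Ck k (fun x => f x + g x).
Proof.
  intros Hf Hg m x Hm. apply ex_derive_n_plus; apply filter_forall; intros y j Hj;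
    [apply Hf | apply Hg]; lia.
Qed.

Lemma Ck_mult k : forall f g, Ck k f -> Ck k g -> Ck k (fun x => f x * g x).
Proof.
  induction k as [|k IH]; intros f g Hf Hg.
  - intros m x Hm. replace m with 0%nat by lia. exact I.
  - apply (Ck_S_is_derive k _ (fun x => Derive f x * g x + f x * Derive g x)).
    + intros x. apply (is_derive_mult f g x (Derive f x) (Derive g x));
        [apply (Ck_S_is_derive_Derive k) .. | intros; apply Rmult_comm]; auto.
    + apply Ck_plus; apply IH; auto using Ck_S_Derive; apply (Ck_le (S k)); auto.
Qed.

Lemma smooth1_is_derive f g : (forall x, is_derive f x (g x)) -> smooth1 g -> smooth1 f.
Proof.
  intros H Hg. apply smooth1_Ck. intros k. apply (Ck_le (S k)); [lia|].
  apply (Ck_S_is_derive k f g H). apply smooth1_Ck, Hg.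
Qed.

Lemma smooth1_ext f g : (forall x, f x = g x) -> smooth1 f -> smooth1 g.
Proof. intros E H k x. apply (ex_derive_n_ext f g k x E), H. Qed.

Lemma smooth1_plus f g : smooth1 f -> smooth1 g -> smooth1 (fun x => f x + g x).
Proof.
  rewrite !smooth1_Ck. intros Hf Hg k. apply Ck_plus; auto.
Qed.

Lemma smooth1_scal a f : smooth1 f -> smooth1 (fun x => a * f x).
Proof. intros H k x. apply ex_derive_n_scal_l, H. Qed.

(* A solution of the linear ODE E' = h E inherits the regularity of h plus one. *)
Lemma smooth1_linear_ode h E :
  (forall x, is_derive E x (h x * E x)) -> smooth1 h -> smooth1 E.
Proof.
  intros HE Hh. apply smooth1_Ck. rewrite smooth1_Ck in Hh.
  induction k as [|k IH].
  - intros m x Hm. replace m with 0%nat by lia. exact I.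
  - apply (Ck_S_is_derive k _ _ HE), Ck_mult; auto.
Qed.

Lemma smooth1_continuous f : smooth1 f -> forall x, continuous f x.
Proof. intros H x. apply (@ex_derive_continuous R_AbsRing R_NormedModule), (H 1%nat x). Qed.

(** * Primitives and shifts by a period *)

Lemma is_derive_zero_constant (G : R -> R) :
  (forall x, is_derive G x 0) -> forall x y, G x = G y.
Proof.
  intros H x y. destruct (Rtotal_order x y) as [Hxy|[->|Hxy]]; auto.
  - apply (eq_is_derive G x y); auto.
  - symmetry. apply (eq_is_derive G y x); auto.
Qed.

Lemma is_derive_translate (F : R -> R) b x d :
  is_derive F (x + b) d -> is_derive (fun s => F (s + b)) x d.
Proof.
  intros H. replace d with (scal 1 d) by (unfold scal; simpl; unfold mult; simpl; ring).
  apply (is_derive_comp F (fun s => s + b)); auto. auto_derive; auto.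
Qed.

(* Comparing derivatives: s |-> F (s + 1) - q F s has derivative zero. *)
Lemma antiderivative_shift (F f : R -> R) q :
  (forall x, is_derive F x (f x)) -> (forall s, f (s + 1) = q * f s) ->
  forall s, F (s + 1) = q * F s + (F 1 - q * F 0).
Proof.
  intros HF Hf s.
  assert (H0 : forall x, is_derive (fun s => F (s + 1) - q * F s) x 0).
  { intros x. replace 0 with (f (x + 1) - q * f x) by (rewrite Hf; ring).
    apply (is_derive_minus (fun s => F (s + 1)) (fun s => q * F s)).
    - apply is_derive_translate, HF.
    - apply (is_derive_scal F), HF. }
  pose proof (is_derive_zero_constant _ H0 s 0) as E. simpl in E.
  rewrite Rplus_0_l in E. lra.
Qed.

Lemma is_derive_RInt_from_0 (f : R -> R) :
  (forall x, continuous f x) -> forall x, is_derive (RInt f 0) x (f x).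
Proof.
  intros H x. apply (@is_derive_RInt R_NormedModule f (RInt f 0) 0 x); auto.
  apply filter_forall. intros b.
  apply (@RInt_correct R_CompleteNormedModule), (@ex_RInt_continuous R_CompleteNormedModule).
  intros; auto.
Qed.

Lemma RInt_0_0 (f : R -> R) : RInt f 0 0 = 0.
Proof. apply (@RInt_point R_CompleteNormedModule). Qed.

Lemma is_derive_pos_lt (f df : R -> R) :
  (forall x, is_derive f x (df x)) -> (forall x, 0 < df x) ->
  forall x y, x < y -> f x < f y.
Proof.
  intros H Hp x y Hxy. apply (incr_function f m_infty p_infty df); simpl; auto.
  intros; apply Hp.
Qed.

Lemma is_derive_pos_inj (f df : R -> R) :
  (forall x, is_derive f x (df x)) -> (forall x, 0 < df x) ->
  forall x y, f x = f y -> x = y.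
Proof.
  intros H Hp x y E. destruct (Rtotal_order x y) as [h|[h|h]]; auto.
  - pose proof (is_derive_pos_lt f df H Hp x y h). lra.
  - pose proof (is_derive_pos_lt f df H Hp y x h). lra.
Qed.

Lemma exp_equivariant_iterate_nat (F : R -> R) a :
  (forall s, F (s + 1) = exp a * F s) ->
  forall (k : nat) s, F (s + INR k) = exp (INR k * a) * F s.
Proof.
  intros H k. induction k as [|k IH]; intros s.
  - simpl. rewrite Rplus_0_r, Rmult_0_l, exp_0. ring.
  - rewrite S_INR. replace (s + (INR k + 1)) with (s + INR k + 1) by ring.
    rewrite H, IH, <- Rmult_assoc, <- exp_plus. f_equal. f_equal. ring.
Qed.

Lemma exp_equivariant_iterate (F : R -> R) a :
  (forall s, F (s + 1) = exp a * F s) ->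
  forall (k : Z) s, F (s + IZR k) = exp (IZR k * a) * F s.
Proof.
  intros H k s. destruct (Z.le_ge_cases 0 k) as [Hk|Hk].
  - rewrite <- (Z2Nat.id k), <- INR_IZR_INZ by exact Hk.
    apply exp_equivariant_iterate_nat; auto.
  - pose proof (exp_equivariant_iterate_nat F a H (Z.to_nat (- k)) (s + IZR k)) as E.
    rewrite INR_IZR_INZ, Z2Nat.id, opp_IZR in E by lia.
    replace (s + IZR k + - IZR k) with s in E by ring.
    rewrite E, <- Rmult_assoc, <- exp_plus.
    replace (IZR k * a + - IZR k * a) with 0 by ring. rewrite exp_0. ring.
Qed.

Lemma translation_iterate (F : R -> R) a :
  (forall s, F (s + 1) = F s + a) -> forall (k : Z) s, F (s + IZR k) = F s + IZR k * a.
Proof.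
  intros H k s. apply exp_inv. rewrite exp_plus, Rmult_comm.
  apply (exp_equivariant_iterate (fun s => exp (F s))).
  intros t. rewrite H, exp_plus. ring.
Qed.

Lemma RInt_from_0_periodic_shift (f : R -> R) :
  (forall x, continuous f x) -> periodic1 f ->
  forall s, RInt f 0 (s + 1) = RInt f 0 s + RInt f 0 1.
Proof.
  intros Hc Hp s.
  rewrite (antiderivative_shift (RInt f 0) f 1), RInt_0_0.
  - simpl. ring.
  - apply is_derive_RInt_from_0, Hc.
  - intros t. rewrite Hp. ring.
Qed.

(** * The product embedding *)

Definition curve_vec (a b : R) : nat -> R :=
  fun j => match j with 0%nat => a | 1%nat => b | _ => 0 end.

Definition torus_vec (i : nat) (c : R) : nat -> R :=
  fun j => if Nat.eqb j (S i) then c else 0.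

Lemma sum_f_R0_single (f : nat -> R) N k :
  (k <= N)%nat -> (forall a, a <> k -> f a = 0) -> sum_f_R0 f N = f k.
Proof.
  intros Hk H. induction N as [|N IH].
  - replace k with 0%nat by lia. reflexivity.
  - rewrite tech5. destruct (Nat.eq_dec k (S N)) as [->|E].
    + rewrite sum_eq_R0; [ring|]. intros a Ha. apply H. lia.
    + rewrite IH, (H (S N)) by lia. ring.
Qed.

Lemma mink_ext n u v u' v' :
  (forall j, u j = u' j) -> (forall j, v j = v' j) -> mink n u v = mink n u' v'.
Proof.
  intros Hu Hv. unfold mink. rewrite Hu, Hv. f_equal.
  apply sum_eq. intros i _. rewrite Hu, Hv. reflexivity.
Qed.

Lemma mink_curve_vec n a b v :
  (1 <= n)%nat -> mink n (curve_vec a b) v = - a * v 0%nat + b * v 1%nat.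
Proof.
  intros Hn. unfold mink. rewrite (sum_f_R0_single _ _ 0) by (lia ||
    (intros [|[|k]] Hk; simpl; [lia|ring..])).
  reflexivity.
Qed.

Lemma mink_torus_vec n i c v :
  (i < n)%nat -> mink n (torus_vec i c) v = c * v (S i).
Proof.
  intros Hi. unfold mink. rewrite (sum_f_R0_single _ _ i) by (lia ||
    (intros k Hk; unfold torus_vec; destruct (Nat.eqb_spec (S k) (S i)); [lia|ring])).
  unfold torus_vec. simpl. rewrite Nat.eqb_refl. ring.
Qed.

Lemma is_derive_upd_0 (f : R -> R) s df :
  is_derive f (s 0%nat) df -> is_derive (fun h => f (upd s 0 h 0%nat)) 0 df.
Proof.
  intros H. unfold upd; simpl.
  replace df with (scal 1 df) by (unfold scal; simpl; unfold mult; simpl; ring).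
  apply (is_derive_comp f (fun h => s 0%nat + h)).
  - rewrite Rplus_0_r. exact H.
  - auto_derive; auto.
Qed.

Section ProductLift.

Variables (Gt Gx D1t D1x D2t D2x : R -> R) (L : nat -> R).
Hypothesis Gt_derive : forall x, is_derive Gt x (D1t x).
Hypothesis Gx_derive : forall x, is_derive Gx x (D1x x).
Hypothesis D1t_derive : forall x, is_derive D1t x (D2t x).
Hypothesis D1x_derive : forall x, is_derive D1x x (D2x x).

Let F := product_lift Gt Gx L.

Lemma pd_product_lift_0 s j : pd F 0 s j = curve_vec (D1t (s 0%nat)) (D1x (s 0%nat)) j.
Proof.
  unfold pd, F, product_lift. destruct j as [|[|j]]; simpl.
  - apply is_derive_unique, (is_derive_upd_0 Gt), Gt_derive.
  - apply is_derive_unique, (is_derive_upd_0 Gx), Gx_derive.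
  - unfold upd; simpl. apply Derive_const.
Qed.

Lemma pd_product_lift_S i s j : pd F (S i) s j = torus_vec (S i) (L (S i)) j.
Proof.
  unfold pd, F, product_lift, torus_vec, upd. destruct j as [|[|j]]; simpl;
    try apply Derive_const.
  destruct (Nat.eqb_spec j i) as [->|E].
  - apply is_derive_unique. auto_derive; auto. ring.
  - apply Derive_const.
Qed.

Lemma pd2_product_lift_00 s j : pd2 F 0 0 s j = curve_vec (D2t (s 0%nat)) (D2x (s 0%nat)) j.
Proof.
  unfold pd2. rewrite (Derive_ext _ (fun h => curve_vec (D1t (upd s 0 h 0%nat))
    (D1x (upd s 0 h 0%nat)) j)) by (intros; apply pd_product_lift_0).
  destruct j as [|[|j]]; simpl.
  - apply is_derive_unique, (is_derive_upd_0 D1t), D1t_derive.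
  - apply is_derive_unique, (is_derive_upd_0 D1x), D1x_derive.
  - apply Derive_const.
Qed.

Lemma pd2_product_lift_S0 i s j : pd2 F (S i) 0 s j = 0.
Proof.
  unfold pd2. rewrite (Derive_ext _ (fun h => curve_vec (D1t (upd s (S i) h 0%nat))
    (D1x (upd s (S i) h 0%nat)) j)) by (intros; apply pd_product_lift_0).
  unfold upd; simpl. apply Derive_const.
Qed.

Lemma pd2_product_lift_S i k s j : pd2 F i (S k) s j = 0.
Proof.
  unfold pd2. rewrite (Derive_ext _ (fun _ => torus_vec (S k) (L (S k)) j))
    by (intros; apply pd_product_lift_S).
  apply Derive_const.
Qed.

Hypothesis base_length_pos : 0 < L 0%nat.
Hypothesis spacelike : forall x, D1x x ^ 2 - D1t x ^ 2 = L 0%nat ^ 2.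
Hypothesis moves_right : forall x, 0 < D1x x.

Lemma product_lift_metric n s i j :
  (1 <= n)%nat -> (i < n)%nat -> (j < n)%nat ->
  induced_metric n F s i j = flat_metric L s i j.
Proof.
  intros Hn Hi Hj. unfold induced_metric, flat_metric. destruct i as [|i].
  - rewrite (mink_ext n _ _ _ (pd F j s) (pd_product_lift_0 s)), mink_curve_vec
      by (auto || reflexivity).
    destruct j as [|j]; rewrite ?pd_product_lift_0, ?pd_product_lift_S; simpl.
    + pose proof (spacelike (s 0%nat)). simpl in *. lra.
    + unfold torus_vec; simpl. ring.
  - rewrite (mink_ext n _ _ _ (pd F j s) (pd_product_lift_S i s)), mink_torus_vec
      by (auto || reflexivity).
    destruct j as [|j]; rewrite ?pd_product_lift_0, ?pd_product_lift_S; simpl.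
    + ring.
    + unfold torus_vec. simpl.
      destruct (Nat.eqb_spec j i), (Nat.eqb_spec i j); subst; try lia; ring.
Qed.

Definition lift_normal (s : nat -> R) : nat -> R :=
  curve_vec (D1x (s 0%nat) / L 0%nat) (D1t (s 0%nat) / L 0%nat).

Lemma lift_normal_future_unit n s : (1 <= n)%nat -> future_unit_normal n F s (lift_normal s).
Proof.
  intros Hn. unfold lift_normal. split; [|split].
  - intros [|i] Hi; rewrite mink_curve_vec by exact Hn.
    + rewrite !pd_product_lift_0. simpl. field. lra.
    + rewrite !pd_product_lift_S. unfold torus_vec. simpl. ring.
  - rewrite mink_curve_vec by exact Hn. simpl.
    pose proof (spacelike (s 0%nat)). field_simplify_eq; [simpl in *; lra|lra].
  - simpl. apply Rdiv_lt_0_compat; auto.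
Qed.

Variable tau : R -> R.
Hypothesis curvature :
  forall x, D1x x * D2t x - D1t x * D2x x = L 0%nat ^ 3 * tau x.

Lemma lift_normal_second_ff n s i j :
  (1 <= n)%nat -> second_ff n F (lift_normal s) s i j = Kbar_of tau (L 0%nat) s i j.
Proof.
  intros Hn. unfold second_ff, Kbar_of, lift_normal. rewrite mink_curve_vec by exact Hn.
  destruct i as [|i]; [destruct j as [|j]|]; simpl.
  - rewrite !pd2_product_lift_00. simpl. pose proof (curvature (s 0%nat)).
    field_simplify_eq; [simpl in *; lra|lra].
  - rewrite !pd2_product_lift_S. ring.
  - destruct j; rewrite ?pd2_product_lift_S0, ?pd2_product_lift_S; ring.
Qed.

Lemma product_lift_induces n :
  (1 <= n)%nat -> induces n F (flat_metric L) (Kbar_of tau (L 0%nat)).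
Proof.
  intros Hn s. split.
  - intros i j Hi Hj. apply product_lift_metric; auto.
  - exists (lift_normal s). split.
    + apply lift_normal_future_unit, Hn.
    + intros i j _ _. apply lift_normal_second_ff, Hn.
Qed.

End ProductLift.

(** * Null curves *)

(* [weight c tau] is e^phi of the header, and [weight (- c) tau] is e^(-phi). *)
Definition weight (c : R) (tau : R -> R) (s : R) : R := exp (c * RInt tau 0 s).

Section Weight.

Variables (c : R) (tau : R -> R).
Hypothesis tau_smooth : smooth1 tau.

Lemma is_derive_weight x : is_derive (weight c tau) x (c * tau x * weight c tau x).
Proof.
  apply (is_derive_comp exp (fun s => c * RInt tau 0 s) x (weight c tau x) (c * tau x)).
  - apply is_derive_exp.
  - apply (is_derive_scal (RInt tau 0)), is_derive_RInt_from_0.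
    apply smooth1_continuous, tau_smooth.
Qed.

Lemma smooth1_weight : smooth1 (weight c tau).
Proof.
  apply (smooth1_linear_ode (fun x => c * tau x)).
  - apply is_derive_weight.
  - apply smooth1_scal, tau_smooth.
Qed.

Lemma weight_pos s : 0 < weight c tau s.
Proof. apply exp_pos. Qed.

Lemma weight_mul_opp s : weight c tau s * weight (- c) tau s = 1.
Proof. unfold weight. rewrite <- exp_plus, <- exp_0. f_equal. ring. Qed.

Hypothesis tau_periodic : periodic1 tau.

Lemma weight_shift s : weight c tau (s + 1) = exp (c * RInt tau 0 1) * weight c tau s.
Proof.
  unfold weight. rewrite <- exp_plus, RInt_from_0_periodic_shift; auto using smooth1_continuous.
  f_equal. ring.
Qed.

End Weight.

Lemma equivariant_antiderivative (f : R -> R) q :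
  (forall x, continuous f x) -> (forall s, f (s + 1) = q * f s) -> q <> 1 ->
  exists F, (forall x, is_derive F x (f x)) /\ forall s, F (s + 1) = q * F s.
Proof.
  intros Hc Hf Hq.
  set (b := RInt f 0 1 / (q - 1)).
  exists (fun s => RInt f 0 s + b). split.
  - intros x. rewrite <- Rplus_0_r. apply (is_derive_plus (RInt f 0) (fun _ => b)).
    + apply is_derive_RInt_from_0, Hc.
    + apply (is_derive_const (V := R_NormedModule)).
  - intros s.
    rewrite (antiderivative_shift (RInt f 0) f q), RInt_0_0.
    + unfold b. simpl. field. lra.
    + apply is_derive_RInt_from_0, Hc.
    + exact Hf.
Qed.

(* The point of R^{1,1} with null coordinates u = t + x and w = x - t. *)
Definition null_t (U W : R -> R) (s : R) : R := (U s - W s) / 2.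
Definition null_x (U W : R -> R) (s : R) : R := (U s + W s) / 2.

Lemma is_derive_null_t U W dU dW :
  (forall x, is_derive U x (dU x)) -> (forall x, is_derive W x (dW x)) ->
  forall x, is_derive (null_t U W) x (null_t dU dW x).
Proof.
  intros HU HW x. unfold null_t. auto_derive.
  - repeat split; eexists; eauto.
  - replace (Derive (fun y : R => U y) x) with (dU x) by (symmetry; apply is_derive_unique, HU).
    replace (Derive (fun y : R => W y) x) with (dW x) by (symmetry; apply is_derive_unique, HW).
    field.
Qed.

Lemma is_derive_null_x U W dU dW :
  (forall x, is_derive U x (dU x)) -> (forall x, is_derive W x (dW x)) ->
  forall x, is_derive (null_x U W) x (null_x dU dW x).
Proof.
  intros HU HW x. unfold null_x. auto_derive.
  - repeat split; eexists; eauto.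
  - replace (Derive (fun y : R => U y) x) with (dU x) by (symmetry; apply is_derive_unique, HU).
    replace (Derive (fun y : R => W y) x) with (dW x) by (symmetry; apply is_derive_unique, HW).
    field.
Qed.

Lemma boost_null Psi u w :
  boost Psi ((u - w) / 2) ((u + w) / 2) =
  ((exp Psi * u - exp (- Psi) * w) / 2, (exp Psi * u + exp (- Psi) * w) / 2).
Proof. unfold boost, cosh, sinh. f_equal; field. Qed.

Lemma increasing_dilation_sign (f : R -> R) q :
  (forall x y, x < y -> f x < f y) -> (forall s, f (s + 1) = q * f s) ->
  forall s, 0 < (q - 1) * f s.
Proof. intros Hlt Hq s. pose proof (Hlt s (s + 1)). rewrite Hq in H. lra. Qed.

Section NullCurve.

Variables (L : nat -> R) (tau : R -> R) (a g : R) (U W : R -> R).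
Let c := L 0%nat.
Hypothesis tau_smooth : smooth1 tau.
Hypothesis c_pos : 0 < c.
Hypotheses (a_pos : 0 < a) (g_pos : 0 < g) (ag_eq : a * g = c ^ 2).
Hypothesis U_derive : forall x, is_derive U x (a * weight c tau x).
Hypothesis W_derive : forall x, is_derive W x (g * weight (- c) tau x).

Let dU s := a * weight c tau s.
Let dW s := g * weight (- c) tau s.
Let ddU s := a * (c * tau s * weight c tau s).
Let ddW s := g * (- c * tau s * weight (- c) tau s).

Lemma is_derive_dU x : is_derive dU x (ddU x).
Proof. apply (is_derive_scal (weight c tau)), is_derive_weight, tau_smooth. Qed.

Lemma is_derive_dW x : is_derive dW x (ddW x).
Proof. apply (is_derive_scal (weight (- c) tau)), is_derive_weight, tau_smooth. Qed.

Lemma null_x_dU_dW_pos x : 0 < null_x dU dW x.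
Proof.
  unfold null_x, dU, dW. pose proof (weight_pos c tau x). pose proof (weight_pos (- c) tau x).
  nra.
Qed.

Lemma Derive_null_x_pos x : 0 < Derive (null_x U W) x.
Proof.
  rewrite (is_derive_unique _ _ _ (is_derive_null_x U W dU dW U_derive W_derive x)).
  apply null_x_dU_dW_pos.
Qed.

Lemma null_x_inj x y : null_x U W x = null_x U W y -> x = y.
Proof.
  apply (is_derive_pos_inj _ _ (is_derive_null_x U W dU dW U_derive W_derive)),
    null_x_dU_dW_pos.
Qed.

Lemma smooth1_null_curve : smooth1 (null_t U W) /\ smooth1 (null_x U W).
Proof.
  assert (HdU : smooth1 dU) by (apply smooth1_scal, smooth1_weight, tau_smooth).
  assert (HdW : smooth1 dW) by (apply smooth1_scal, smooth1_weight, tau_smooth).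
  split.
  - apply (smooth1_is_derive _ (null_t dU dW)); [apply is_derive_null_t; auto|].
    apply (smooth1_ext (fun s => / 2 * dU s + - / 2 * dW s)); [intros; unfold null_t; field|].
    apply smooth1_plus; apply smooth1_scal; auto.
  - apply (smooth1_is_derive _ (null_x dU dW)); [apply is_derive_null_x; auto|].
    apply (smooth1_ext (fun s => / 2 * dU s + / 2 * dW s)); [intros; unfold null_x; field|].
    apply smooth1_plus; apply smooth1_scal; auto.
Qed.

Lemma null_curve_induces n :
  (1 <= n)%nat ->
  induces n (product_lift (null_t U W) (null_x U W) L) (flat_metric L) (Kbar_of tau c).
Proof.
  intros Hn. pose proof (weight_mul_opp c tau) as Hw.
  apply (product_lift_induces _ _ (null_t dU dW) (null_x dU dW) (null_t ddU ddW) (null_x ddU ddW));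
    auto using is_derive_null_t, is_derive_null_x, is_derive_dU, is_derive_dW, null_x_dU_dW_pos.
  - intros x. fold c. unfold null_t, null_x, dU, dW. rewrite <- ag_eq.
    transitivity (a * g * (weight c tau x * weight (- c) tau x)); [field | rewrite Hw; ring].
  - intros x. fold c. unfold null_t, null_x, dU, dW, ddU, ddW.
    replace (c ^ 3) with (c * (a * g)) by (rewrite ag_eq; ring).
    transitivity (c * tau x * (a * g * (weight c tau x * weight (- c) tau x)));
      [field | rewrite Hw; ring].
Qed.

Lemma U_lt x y : x < y -> U x < U y.
Proof.
  apply (is_derive_pos_lt U dU U_derive).
  intros; apply Rmult_lt_0_compat; auto using weight_pos.
Qed.

Lemma W_lt x y : x < y -> W x < W y.
Proof.
  apply (is_derive_pos_lt W dW W_derive).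
  intros; apply Rmult_lt_0_compat; auto using weight_pos.
Qed.

Lemma null_curve_kasner Psi :
  Psi <> 0 -> (forall s, U (s + 1) = exp Psi * U s) ->
  (forall s, W (s + 1) = exp (- Psi) * W s) ->
  kasner_curve_lift Psi (null_t U W) (null_x U W).
Proof.
  intros HPsi U_shift W_shift.
  pose proof (increasing_dilation_sign U _ U_lt U_shift) as U_sign.
  pose proof (increasing_dilation_sign W _ W_lt W_shift) as W_sign.
  destruct smooth1_null_curve as [Gt_smooth Gx_smooth].
  repeat split; auto.
  - intros s. unfold null_t, null_x. specialize (U_sign s). specialize (W_sign s).
    destruct (Rlt_dec 0 Psi) as [Hpos|Hneg].
    + assert (1 < exp Psi) by (rewrite <- exp_0; apply exp_increasing, Hpos).
      assert (exp (- Psi) < 1) by (rewrite <- exp_0; apply exp_increasing; lra).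
      apply Rabs_def1; nra.
    + assert (exp Psi < 1) by (rewrite <- exp_0; apply exp_increasing; lra).
      assert (1 < exp (- Psi)) by (rewrite <- exp_0; apply exp_increasing; lra).
      apply Rabs_def1; nra.
  - exists 1%Z. intros s. rewrite Rmult_1_l. unfold null_t, null_x.
    rewrite boost_null, U_shift, W_shift. reflexivity.
  - intros s. right. apply Rgt_not_eq, Derive_null_x_pos.
  - intros s s' k E. exists k.
    unfold null_t, null_x in E. rewrite boost_null in E. injection E as Et Ex.
    apply (is_derive_pos_inj U dU U_derive).
    + intros; apply Rmult_lt_0_compat; auto using weight_pos.
    + rewrite (exp_equivariant_iterate U Psi U_shift). lra.
Qed.

Lemma null_curve_cylinder L0 :
  0 < L0 -> (forall s, U (s + 1) = U s + L0) -> (forall s, W (s + 1) = W s + L0) ->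
  cylinder_curve_lift L0 (null_t U W) (null_x U W).
Proof.
  intros HL0 U_shift W_shift.
  assert (Gx_shift : forall s, null_x U W (s + 1) = null_x U W s + L0).
  { intros s. unfold null_x. rewrite U_shift, W_shift. field. }
  destruct smooth1_null_curve as [Gt_smooth Gx_smooth].
  repeat split; auto.
  - exists 1%Z. intros s. rewrite Gx_shift, Rmult_1_l. unfold null_t.
    rewrite U_shift, W_shift. split; [field | reflexivity].
  - intros s. right. apply Rgt_not_eq, Derive_null_x_pos.
  - intros s s' k _ E. exists k. apply null_x_inj.
    rewrite E, (translation_iterate (null_x U W) L0 Gx_shift). ring.
Qed.

End NullCurve.

(** * Kasner and static toroidal embeddings *)

Lemma kasner_embedding n (L : nat -> R) tau :
  (1 <= n)%nat -> smooth1 tau -> periodic1 tau -> 0 < L 0%nat ->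
  L 0%nat * RInt tau 0 1 <> 0 ->
  exists Gt Gx, kasner_curve_lift (L 0%nat * RInt tau 0 1) Gt Gx /\
    induces n (product_lift Gt Gx L) (flat_metric L) (Kbar_of tau (L 0%nat)).
Proof.
  intros Hn Ht Hp Hc HPsi.
  set (c := L 0%nat) in *. set (Psi := c * RInt tau 0 1) in *.
  assert (Hexp : exp Psi <> 1) by (intros E; apply HPsi, exp_inv; rewrite E, exp_0; auto).
  assert (Hexp' : exp (- Psi) <> 1).
  { intros E. apply HPsi. rewrite <- exp_0 in E. apply exp_inv in E. lra. }
  destruct (equivariant_antiderivative (weight c tau) (exp Psi)) as [U0 [HU0 U0_shift]];
    auto using smooth1_continuous, smooth1_weight, weight_shift.
  destruct (equivariant_antiderivative (weight (- c) tau) (exp (- Psi)))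
    as [W0 [HW0 W0_shift]]; auto using smooth1_continuous, smooth1_weight.
  { intros s. rewrite weight_shift by auto. unfold Psi. f_equal. f_equal. ring. }
  set (U := fun s => c * U0 s). set (W := fun s => c * W0 s).
  assert (HU : forall x, is_derive U x (c * weight c tau x))
    by (intros; apply (is_derive_scal U0), HU0).
  assert (HW : forall x, is_derive W x (c * weight (- c) tau x))
    by (intros; apply (is_derive_scal W0), HW0).
  exists (null_t U W), (null_x U W). split.
  - apply (null_curve_kasner L tau c c); auto; intros s; unfold U, W;
      rewrite ?U0_shift, ?W0_shift; ring.
  - apply (null_curve_induces L tau c c); auto. unfold c. ring.
Qed.

Lemma cylinder_embedding n (L : nat -> R) tau :
  (1 <= n)%nat -> smooth1 tau -> periodic1 tau -> 0 < L 0%nat -> RInt tau 0 1 = 0 ->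
  exists L0 Gt Gx, 0 < L0 /\ cylinder_curve_lift L0 Gt Gx /\
    induces n (product_lift Gt Gx L) (flat_metric L) (Kbar_of tau (L 0%nat)).
Proof.
  intros Hn Ht Hp Hc Hcirc.
  set (c := L 0%nat) in *.
  assert (weight_periodic : forall c', periodic1 (weight c' tau)).
  { intros c' s. rewrite weight_shift, Hcirc, Rmult_0_r, exp_0 by auto. ring. }
  set (P := RInt (weight c tau) 0 1). set (M := RInt (weight (- c) tau) 0 1).
  assert (HP : 0 < P) by (apply RInt_gt_0; auto using weight_pos, smooth1_continuous,
    smooth1_weight; lra).
  assert (HM : 0 < M) by (apply RInt_gt_0; auto using weight_pos, smooth1_continuous,
    smooth1_weight; lra).
  (* Rescaling the two null coordinates by a = c alpha and g = c / alpha keeps a g = c^2;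
     alpha is chosen so that both advance by the same amount a P = g M over a period,
     which makes the time coordinate periodic. *)
  set (alpha := sqrt (M / P)).
  assert (Halpha : 0 < alpha) by (apply sqrt_lt_R0, Rdiv_lt_0_compat; auto).
  assert (Halpha2 : alpha * alpha = M / P)
    by (apply sqrt_sqrt; left; apply Rdiv_lt_0_compat; auto).
  set (a := c * alpha). set (g := c / alpha).
  assert (Ha : 0 < a) by (apply Rmult_lt_0_compat; auto).
  assert (Hg : 0 < g) by (apply Rdiv_lt_0_compat; auto).
  assert (balance : g * M = a * P).
  { unfold a, g. replace M with (alpha * alpha * P) by (rewrite Halpha2; field; lra).
    field. lra. }
  set (U := fun s => a * RInt (weight c tau) 0 s).
  set (W := fun s => g * RInt (weight (- c) tau) 0 s).
  assert (HU : forall x, is_derive U x (a * weight c tau x)).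
  { intros. apply (is_derive_scal (RInt (weight c tau) 0)), is_derive_RInt_from_0.
    apply smooth1_continuous, smooth1_weight, Ht. }
  assert (HW : forall x, is_derive W x (g * weight (- c) tau x)).
  { intros. apply (is_derive_scal (RInt (weight (- c) tau) 0)), is_derive_RInt_from_0.
    apply smooth1_continuous, smooth1_weight, Ht. }
  assert (U_shift : forall s, U (s + 1) = U s + a * P).
  { intros s. unfold U. rewrite RInt_from_0_periodic_shift;
      auto using smooth1_continuous, smooth1_weight. fold P. ring. }
  assert (W_shift : forall s, W (s + 1) = W s + a * P).
  { intros s. unfold W. rewrite RInt_from_0_periodic_shift, <- balance;
      auto using smooth1_continuous, smooth1_weight. fold M. ring. }
  assert (HL0 : 0 < a * P) by (apply Rmult_lt_0_compat; auto).
  exists (a * P), (null_t U W), (null_x U W). split; [exact HL0 | split].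
  - apply (null_curve_cylinder L tau a g); auto.
  - apply (null_curve_induces L tau a g); auto. unfold a, g, c. field. lra.
Qed.

Theorem proposition6p2
  (n : nat) (l : nat -> R) (mu r : R) (tau N : R -> R) :
  (3 <= n)%nat ->
  (forall k, (k < n)%nat -> 0 < l k) ->
  smooth1 tau -> periodic1 tau ->
  smooth1 N -> periodic1 N -> (forall x, 0 < N x) ->
  let tau_star := RInt (fun s => N s * tau s) 0 1 / RInt N 0 1 in
  ((mu * tau_star > 0 /\ r = Rpower (mu / tau_star) (/ INR n)) \/
   (mu = 0 /\ tau_star = 0 /\ 0 < r)) ->
  let gbar := flat_metric (fun k => r * l k) in
  let Kbar := Kbar_of tau (r * l 0%nat) in
  let tau_circ := RInt tau 0 1 in
  let lhat := fun k => r * l k in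
  (tau_circ <> 0 ->
     exists Gt Gx : R -> R,
       kasner_curve_lift (r * l 0%nat * tau_circ) Gt Gx /\
       induces n (product_lift Gt Gx lhat) gbar Kbar) /\
  (tau_circ = 0 ->
     exists (L : R) (Gt Gx : R -> R),
       0 < L /\ cylinder_curve_lift L Gt Gx /\
       induces n (product_lift Gt Gx lhat) gbar Kbar).
Proof.
  intros Hn Hl Htau Htau_per _ _ _ tau_star Hcase gbar Kbar tau_circ lhat.
  assert (Hr : 0 < r).
  { destruct Hcase as [[_ ->] | [_ [_ Hr]]]; [apply exp_pos | exact Hr]. }
  assert (Hc : 0 < lhat 0%nat) by (apply Rmult_lt_0_compat; auto; apply Hl; lia).
  split; intros Hcirc.
  - apply (kasner_embedding n lhat tau); auto; [lia|].
    apply Rmult_integral_contrapositive_currified; auto; lra.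
  - apply (cylinder_embedding n lhat tau); auto. lia.
Qed.
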